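(* Let $F\colon\mathcal{B}\to\mathcal{C}$ be a lax functor of bicategories which is essentially surjective, essentially full, and fully faithful. Then for each object $X\in\mathcal{C}$ the lax slice bicategory $F\downarrow X$ has an inc-lax terminal object.
   Context: Lax functor constraints: $F^2_{g,f}\colon Fg\circ Ff\Rightarrow F(gf)$, $F^0_A\colon 1_{FA}\Rightarrow F1_A$. $F$ is essentially surjective if it is surjective on adjoint-equivalence classes of objects; essentially full if each local functor $\mathcal{B}(A,B)\to\mathcal{C}(FA,FB)$ is surjective on isomorphism classes of 1-cells; fully faithful if it is a bijection on 2-cells between any pair of parallel 1-cells. Lax slice $F\downarrow X$: objects $(A,f_A)$ with $f_A\colon FA\to X$; 1-cells $(p,\theta)\colon(A_0,f_0)\to(A_1,f_1)$ with $p\colon A_0\to A_1$ and $\theta\colon f_0\Rightarrow f_1\circ Fp$; 2-cells $\alpha\colon p_0\Rightarrow p_1$ with $(1_{f_1}*F\alpha)\circ\theta_0=\theta_1$; identity 1-cell $(1_A,(1_{f_A}*F^0_A)\circ r^{-1}_{f_A})$; composite of $(p_0,\theta_0),(p_1,\theta_1)$ is $(p_1p_0,(1_{f_2}*F^2_{p_1,p_0})\circ a\circ(\theta_1*1_{Fp_0})\circ\theta_0)$; 2-cell compositions, associator, unitors from $\mathcal{B}$. An inc-lax terminal object of a bicategory $\mathcal{D}$ is an object $T$ with a lax transformation $k\colon\mathrm{Id}_{\mathcal{D}}\to\mathrm{const}_T$ (where $\mathrm{const}_T$ sends all objects to $T$, 1-cells to $1_T$, 2-cells to $1_{1_T}$,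 with unit constraint $1_{1_T}$ and composition constraint $\ell_{1_T}$) such that every component $k_Z\colon Z\to T$ is initial in the hom-category $\mathcal{D}(Z,T)$ and $k_T=1_T$. *)

Set Implicit Arguments.
Unset Strict Implicit.

Record bicat_data : Type := BicatData {
  ob : Type;
  hom : ob -> ob -> Type;
  cell : forall A B : ob, hom A B -> hom A B -> Type;
  id1 : forall A : ob, hom A A;
  comp1 : forall A B C : ob, hom B C -> hom A B -> hom A C;
  id2 : forall (A B : ob) (f : hom A B), cell f f;
  vcomp : forall (A B : ob) (f g h : hom A B), cell g h -> cell f g -> cell f h;
  hcomp : forall (A B C : ob) (g g' : hom B C) (f f' : hom A B),
      cell g g' -> cell f f' -> cell (comp1 g f) (comp1 g' f');
  assoc : forall (A B C D : ob) (h : hom C D) (g : hom B C) (f : hom A B),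
      cell (comp1 (comp1 h g) f) (comp1 h (comp1 g f));
  assoc_inv : forall (A B C D : ob) (h : hom C D) (g : hom B C) (f : hom A B),
      cell (comp1 h (comp1 g f)) (comp1 (comp1 h g) f);
  lunit : forall (A B : ob) (f : hom A B), cell (comp1 (id1 B) f) f;
  lunit_inv : forall (A B : ob) (f : hom A B), cell f (comp1 (id1 B) f);
  runit : forall (A B : ob) (f : hom A B), cell (comp1 f (id1 A)) f;
  runit_inv : forall (A B : ob) (f : hom A B), cell f (comp1 f (id1 A))
}.

Arguments hom {b} A B.
Arguments cell {b A B} f g.
Arguments id1 {b} A.
Arguments comp1 {b A B C} g f.
Arguments id2 {b A B} f.
Arguments vcomp {b A B f g h} _ _.
Arguments hcomp {b A B C g g' f f'} _ _.
Arguments assoc {b A B C D} h g f.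
Arguments assoc_inv {b A B C D} h g f.
Arguments lunit {b A B} f.
Arguments lunit_inv {b A B} f.
Arguments runit {b A B} f.
Arguments runit_inv {b A B} f.

Declare Scope bicat_scope.
Open Scope bicat_scope.
Notation "g ∘ f" := (comp1 g f) (at level 40, left associativity) : bicat_scope.
Notation "b ⋆ a" := (hcomp b a) (at level 40, left associativity) : bicat_scope.
Notation "b • a" := (vcomp b a) (at level 50, left associativity) : bicat_scope.

Record is_bicat (B : bicat_data) : Prop := {
  vcomp_assoc : forall (X Y : ob B) (f g h k : hom X Y)
      (c : cell h k) (b : cell g h) (a : cell f g), c • (b • a) = (c • b) • a;
  vcomp_id_l : forall (X Y : ob B) (f g : hom X Y) (a : cell f g), id2 g • a = a;
  vcomp_id_r : forall (X Y : ob B) (f g : hom X Y) (a : cell f g), a • id2 f = a;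
  hcomp_id : forall (X Y Z : ob B) (g : hom Y Z) (f : hom X Y),
      id2 g ⋆ id2 f = id2 (g ∘ f);
  interchange : forall (X Y Z : ob B) (g g' g'' : hom Y Z) (f f' f'' : hom X Y)
      (b : cell g g') (b' : cell g' g'') (a : cell f f') (a' : cell f' f''),
      (b' • b) ⋆ (a' • a) = (b' ⋆ a') • (b ⋆ a);
  assoc_nat : forall (W X Y Z : ob B) (h h' : hom Y Z) (g g' : hom X Y) (f f' : hom W X)
      (c : cell h h') (b : cell g g') (a : cell f f'),
      assoc h' g' f' • ((c ⋆ b) ⋆ a) = (c ⋆ (b ⋆ a)) • assoc h g f;
  lunit_nat : forall (X Y : ob B) (f f' : hom X Y) (a : cell f f'),
      lunit f' • (id2 (id1 Y) ⋆ a) = a • lunit f;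
  runit_nat : forall (X Y : ob B) (f f' : hom X Y) (a : cell f f'),
      runit f' • (a ⋆ id2 (id1 X)) = a • runit f;
  assoc_inv_l : forall (W X Y Z : ob B) (h : hom Y Z) (g : hom X Y) (f : hom W X),
      assoc_inv h g f • assoc h g f = id2 ((h ∘ g) ∘ f);
  assoc_inv_r : forall (W X Y Z : ob B) (h : hom Y Z) (g : hom X Y) (f : hom W X),
      assoc h g f • assoc_inv h g f = id2 (h ∘ (g ∘ f));
  lunit_inv_l : forall (X Y : ob B) (f : hom X Y), lunit_inv f • lunit f = id2 (id1 Y ∘ f);
  lunit_inv_r : forall (X Y : ob B) (f : hom X Y), lunit f • lunit_inv f = id2 f;
  runit_inv_l : forall (X Y : ob B) (f : hom X Y), runit_inv f • runit f = id2 (f ∘ id1 X);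
  runit_inv_r : forall (X Y : ob B) (f : hom X Y), runit f • runit_inv f = id2 f;
  pentagon : forall (V W X Y Z : ob B) (k : hom Y Z) (h : hom X Y) (g : hom W X) (f : hom V W),
      (id2 k ⋆ assoc h g f) • assoc k (h ∘ g) f • (assoc k h g ⋆ id2 f)
      = assoc k h (g ∘ f) • assoc (k ∘ h) g f;
  triangle : forall (X Y Z : ob B) (g : hom Y Z) (f : hom X Y),
      (id2 g ⋆ lunit f) • assoc g (id1 Y) f = runit g ⋆ id2 f
}.

Record lax_functor_data (B C : bicat_data) : Type := LaxFunctorData {
  fob : ob B -> ob C;
  fhom : forall A A' : ob B, hom A A' -> hom (fob A) (fob A');
  fcell : forall (A A' : ob B) (f g : hom A A'), cell f g -> cell (fhom f) (fhom g);
  fcomp : forall (A A' A'' : ob B) (g : hom A' A'') (f : hom A A'),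
      cell (fhom g ∘ fhom f) (fhom (g ∘ f));
  funit : forall A : ob B, cell (id1 (fob A)) (fhom (id1 A))
}.

Arguments fob {B C} _ _.
Arguments fhom {B C} _ {A A'} _.
Arguments fcell {B C} _ {A A' f g} _.
Arguments fcomp {B C} _ {A A' A''} _ _.
Arguments funit {B C} _ _.

Record is_lax_functor (B C : bicat_data) (F : lax_functor_data B C) : Prop := {
  fcell_id : forall (A A' : ob B) (f : hom A A'), fcell F (id2 f) = id2 (fhom F f);
  fcell_vcomp : forall (A A' : ob B) (f g h : hom A A') (b : cell g h) (a : cell f g),
      fcell F (b • a) = fcell F b • fcell F a;
  fcomp_nat : forall (X Y Z : ob B) (g g' : hom Y Z) (f f' : hom X Y)
      (b : cell g g') (a : cell f f'),
      fcomp F g' f' • (fcell F b ⋆ fcell F a) = fcell F (b ⋆ a) • fcomp F g f;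
  lax_assoc : forall (W X Y Z : ob B) (h : hom Y Z) (g : hom X Y) (f : hom W X),
      fcell F (assoc h g f) • fcomp F (h ∘ g) f • (fcomp F h g ⋆ id2 (fhom F f))
      = fcomp F h (g ∘ f) • (id2 (fhom F h) ⋆ fcomp F g f)
        • assoc (fhom F h) (fhom F g) (fhom F f);
  lax_lunit : forall (X Y : ob B) (f : hom X Y),
      lunit (fhom F f) = fcell F (lunit f) • fcomp F (id1 Y) f • (funit F Y ⋆ id2 (fhom F f));
  lax_runit : forall (X Y : ob B) (f : hom X Y),
      runit (fhom F f) = fcell F (runit f) • fcomp F f (id1 X) • (id2 (fhom F f) ⋆ funit F X)
}.

Definition invertible2 {B : bicat_data} {X Y : ob B} {f g : hom X Y} (a : cell f g) : Prop :=
  exists b : cell g f, b • a = id2 f /\ a • b = id2 g.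

Definition adjoint_equivalence {B : bicat_data} {X Y : ob B} (f : hom X Y) : Prop :=
  exists (g : hom Y X) (eta : cell (id1 X) (g ∘ f)) (eps : cell (f ∘ g) (id1 Y)),
    invertible2 eta /\ invertible2 eps /\
    lunit f • (eps ⋆ id2 f) • assoc_inv f g f • (id2 f ⋆ eta) • runit_inv f = id2 f /\
    runit g • (id2 g ⋆ eps) • assoc g f g • (eta ⋆ id2 g) • lunit_inv g = id2 g.

Definition adjoint_equivalent {B : bicat_data} (X Y : ob B) : Prop :=
  exists f : hom X Y, adjoint_equivalence f.

Definition essentially_surjective {B C : bicat_data} (F : lax_functor_data B C) : Prop :=
  forall X : ob C, exists A : ob B, adjoint_equivalent (fob F A) X.

Definition essentially_full {B C : bicat_data} (F : lax_functor_data B C) : Prop :=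
  forall (A A' : ob B) (f : hom (fob F A) (fob F A')),
    exists (p : hom A A') (a : cell (fhom F p) f), invertible2 a.

Definition fully_faithful {B C : bicat_data} (F : lax_functor_data B C) : Prop :=
  forall (A A' : ob B) (p q : hom A A'),
    (forall a b : cell p q, fcell F a = fcell F b -> a = b) /\
    (forall c : cell (fhom F p) (fhom F q), exists a : cell p q, fcell F a = c).

(* Lax transformations and inc-lax terminal objects, relative to a     *)
(* predicate singling out the 2-cells (used for the lax slice, whose   *)
(* 2-cells are the 2-cells of B satisfying a compatibility equation).  *)

Definition cellpred (D : bicat_data) : Type :=
  forall (X Y : ob D) (f g : hom X Y), cell f g -> Prop.

Definition all_cells (D : bicat_data) : cellpred D := fun _ _ _ _ _ => True.

Definition lax_transformation {D E : bicat_data} (PD : cellpred D) (PE : cellpred E)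
    (G H : lax_functor_data D E)
    (a1 : forall X : ob D, hom (fob G X) (fob H X))
    (a2 : forall (X Y : ob D) (f : hom X Y), cell (fhom H f ∘ a1 X) (a1 Y ∘ fhom G f))
    : Prop :=
  (forall (X Y : ob D) (f : hom X Y), PE _ _ _ _ (a2 X Y f)) /\
  (forall (X Y : ob D) (f g : hom X Y) (t : cell f g), PD _ _ _ _ t ->
      (id2 (a1 Y) ⋆ fcell G t) • a2 X Y f = a2 X Y g • (fcell H t ⋆ id2 (a1 X))) /\
  (forall X : ob D,
      (id2 (a1 X) ⋆ funit G X) • runit_inv (a1 X) • lunit (a1 X)
      = a2 X X (id1 X) • (funit H X ⋆ id2 (a1 X))) /\
  (forall (X Y Z : ob D) (f : hom X Y) (g : hom Y Z),
      (id2 (a1 Z) ⋆ fcomp G g f) • assoc (a1 Z) (fhom G g) (fhom G f)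
      • (a2 Y Z g ⋆ id2 (fhom G f)) • assoc_inv (fhom H g) (a1 Y) (fhom G f)
      • (id2 (fhom H g) ⋆ a2 X Y f) • assoc (fhom H g) (fhom H f) (a1 X)
      = a2 X Z (g ∘ f) • (fcomp H g f ⋆ id2 (a1 X))).

Definition id_lax (D : bicat_data) : lax_functor_data D D :=
  @LaxFunctorData D D (fun X => X) (fun _ _ f => f) (fun _ _ _ _ t => t)
    (fun _ _ _ g f => id2 (g ∘ f)) (fun X => id2 (id1 X)).

Definition const_lax (D : bicat_data) (T : ob D) : lax_functor_data D D :=
  @LaxFunctorData D D (fun _ => T) (fun _ _ _ => id1 T) (fun _ _ _ _ _ => id2 (id1 T))
    (fun _ _ _ _ _ => lunit (id1 T)) (fun _ => id2 (id1 T)).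

Definition initial_1cell {D : bicat_data} (P : cellpred D) {Z T : ob D} (f : hom Z T) : Prop :=
  forall g : hom Z T, exists a : cell f g, P _ _ _ _ a /\
    (forall b : cell f g, P _ _ _ _ b -> b = a).

Definition inc_lax_terminal {D : bicat_data} (P : cellpred D) (T : ob D) : Prop :=
  exists (k1 : forall Z : ob D, hom (fob (id_lax D) Z) (fob (const_lax T) Z))
         (k2 : forall (Z Z' : ob D) (u : hom Z Z'),
                 cell (fhom (const_lax T) u ∘ k1 Z) (k1 Z' ∘ fhom (id_lax D) u)),
    @lax_transformation D D P P (id_lax D) (const_lax T) k1 k2 /\
    (forall Z : ob D, initial_1cell P (k1 Z)) /\
    k1 T = id1 T.

Definition has_inc_lax_terminal {D : bicat_data} (P : cellpred D) : Prop :=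
  exists T : ob D, inc_lax_terminal P T.

Section LaxSlice.
Variables (B C : bicat_data) (F : lax_functor_data B C) (X : ob C).

Definition slice_ob : Type := { A : ob B & hom (fob F A) X }.

Definition slice_hom (Z0 Z1 : slice_ob) : Type :=
  { p : hom (projT1 Z0) (projT1 Z1) & cell (projT2 Z0) (projT2 Z1 ∘ fhom F p) }.

Definition slice_cell (Z0 Z1 : slice_ob) (u v : slice_hom Z0 Z1) : Type :=
  cell (projT1 u) (projT1 v).

Definition slice_id1 (Z : slice_ob) : slice_hom Z Z :=
  existT _ (id1 (projT1 Z)) ((id2 (projT2 Z) ⋆ funit F (projT1 Z)) • runit_inv (projT2 Z)).

Definition slice_comp1 (Z0 Z1 Z2 : slice_ob) (v : slice_hom Z1 Z2) (u : slice_hom Z0 Z1)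
    : slice_hom Z0 Z2 :=
  existT _ (projT1 v ∘ projT1 u)
    ((id2 (projT2 Z2) ⋆ fcomp F (projT1 v) (projT1 u))
     • assoc (projT2 Z2) (fhom F (projT1 v)) (fhom F (projT1 u))
     • (projT2 v ⋆ id2 (fhom F (projT1 u)))
     • projT2 u).

Definition lax_slice : bicat_data :=
  @BicatData slice_ob slice_hom slice_cell slice_id1 slice_comp1
    (fun _ _ u => id2 (projT1 u))
    (fun _ _ _ _ _ b a => b • a)
    (fun _ _ _ _ _ _ _ b a => b ⋆ a)
    (fun _ _ _ _ h g f => assoc (projT1 h) (projT1 g) (projT1 f))
    (fun _ _ _ _ h g f => assoc_inv (projT1 h) (projT1 g) (projT1 f))
    (fun _ _ f => lunit (projT1 f))
    (fun _ _ f => lunit_inv (projT1 f))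
    (fun _ _ f => runit (projT1 f))
    (fun _ _ f => runit_inv (projT1 f)).

Definition lax_slice_cells : cellpred lax_slice :=
  fun (Z0 Z1 : slice_ob) (u v : slice_hom Z0 Z1) (a : slice_cell u v) =>
    (id2 (projT2 Z1) ⋆ fcell F a) • projT2 u = projT2 v.

End LaxSlice.

Arguments lax_slice {B C} F X.
Arguments lax_slice_cells {B C} F X.

From Stdlib Require Import ClassicalEpsilon ProofIrrelevance.

(* By essential surjectivity, pick an object (A, e) of F ↓ X with e : FA → X an
   equivalence.  Whiskering by e and applying F are both bijective on 2-cells, so for a
   1-cell (p, θ) into (A, e) with θ invertible, the slice 2-cells (p, θ) ⇒ (q, σ) are
   exactly the solutions α of e ⋆ Fα = σ • θ⁻¹: such 1-cells are initial in their
   hom-category.  Essential fullness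
   provides one out of every object, and also makes F⁰ invertible, so the identity of
   (A, e) is one of them.  An object T receiving an initial 1-cell k_Z from every Z, with
   k_T = 1_T, is inc-lax terminal: the components of the lax transformation are the unique
   slice 2-cells out of 1_T ∘ k_Z, and each of its axioms compares two 2-cells out of an
   initial 1-cell. *)

Section TwoCellCalculus.
Context {D : bicat_data} (HD : is_bicat D).

Lemma vcompA {X Y : ob D} {f g h k : hom X Y} (c : cell h k) (b : cell g h) (a : cell f g) :
  c • (b • a) = c • b • a.
Proof. apply (vcomp_assoc HD). Qed.

Lemma id2_vcomp {X Y : ob D} {f g : hom X Y} (a : cell f g) : id2 g • a = a.
Proof. apply (vcomp_id_l HD). Qed.

Lemma vcomp_id2 {X Y : ob D} {f g : hom X Y} (a : cell f g) : a • id2 f = a.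
Proof. apply (vcomp_id_r HD). Qed.

Lemma hcomp_id2 {X Y Z : ob D} (g : hom Y Z) (f : hom X Y) : id2 g ⋆ id2 f = id2 (g ∘ f).
Proof. apply (hcomp_id HD). Qed.

Lemma hcomp_vcomp {X Y Z : ob D} {g g' g'' : hom Y Z} {f f' f'' : hom X Y}
    (b : cell g g') (b' : cell g' g'') (a : cell f f') (a' : cell f' f'') :
  (b' • b) ⋆ (a' • a) = (b' ⋆ a') • (b ⋆ a).
Proof. apply (interchange HD). Qed.

Lemma lwhisker_vcomp {X Y Z : ob D} (g : hom Y Z) {f f' f'' : hom X Y}
    (a : cell f f') (a' : cell f' f'') :
  id2 g ⋆ (a' • a) = (id2 g ⋆ a') • (id2 g ⋆ a).
Proof. rewrite <- hcomp_vcomp, id2_vcomp. reflexivity. Qed.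

Lemma rwhisker_vcomp {X Y Z : ob D} {g g' g'' : hom Y Z} (f : hom X Y)
    (b : cell g g') (b' : cell g' g'') :
  (b' • b) ⋆ id2 f = (b' ⋆ id2 f) • (b ⋆ id2 f).
Proof. rewrite <- hcomp_vcomp, id2_vcomp. reflexivity. Qed.

Lemma hcomp_whisker_l {X Y Z : ob D} {g g' : hom Y Z} {f f' : hom X Y}
    (b : cell g g') (a : cell f f') :
  b ⋆ a = (b ⋆ id2 f') • (id2 g ⋆ a).
Proof. rewrite <- hcomp_vcomp, id2_vcomp, vcomp_id2. reflexivity. Qed.

Lemma hcomp_whisker_r {X Y Z : ob D} {g g' : hom Y Z} {f f' : hom X Y}
    (b : cell g g') (a : cell f f') :
  b ⋆ a = (id2 g' ⋆ a) • (b ⋆ id2 f).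
Proof. rewrite <- hcomp_vcomp, id2_vcomp, vcomp_id2. reflexivity. Qed.

Lemma vcomp_lcongr2 {X Y : ob D} {f g h k : hom X Y} {x : cell h k} {b : cell g h}
    {a : cell f g} {c : cell f h} :
  b • a = c -> x • b • a = x • c.
Proof. intros <-. symmetry. apply vcompA. Qed.

Lemma vcomp_lcongr3 {X Y : ob D} {f g h k l : hom X Y} {x : cell k l} {c : cell h k}
    {b : cell g h} {a : cell f g} {d : cell f k} :
  c • b • a = d -> x • c • b • a = x • d.
Proof. intros <-. rewrite !vcompA. reflexivity. Qed.


Lemma id2_invertible {X Y : ob D} (f : hom X Y) : invertible2 (id2 f).
Proof. exists (id2 f). split; apply id2_vcomp. Qed.

Lemma vcomp_invertible {X Y : ob D} {f g h : hom X Y} (b : cell g h) (a : cell f g) :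
  invertible2 b -> invertible2 a -> invertible2 (b • a).
Proof.
  intros [b' [Hb1 Hb2]] [a' [Ha1 Ha2]]. exists (a' • b'). split.
  - rewrite vcompA, <- (vcompA a' b' b), Hb1, vcomp_id2. exact Ha1.
  - rewrite vcompA, <- (vcompA b a a'), Ha2, vcomp_id2. exact Hb2.
Qed.

Lemma hcomp_invertible {X Y Z : ob D} {g g' : hom Y Z} {f f' : hom X Y}
    (b : cell g g') (a : cell f f') :
  invertible2 b -> invertible2 a -> invertible2 (b ⋆ a).
Proof.
  intros [b' [Hb1 Hb2]] [a' [Ha1 Ha2]]. exists (b' ⋆ a').
  rewrite <- !hcomp_vcomp, Hb1, Ha1, Hb2, Ha2, !hcomp_id2. split; reflexivity.
Qed.

Lemma assoc_invertible {W X Y Z : ob D} (h : hom Y Z) (g : hom X Y) (f : hom W X) :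
  invertible2 (assoc h g f).
Proof. exists (assoc_inv h g f). split; [apply (assoc_inv_l HD) | apply (assoc_inv_r HD)]. Qed.

Lemma assoc_inv_invertible {W X Y Z : ob D} (h : hom Y Z) (g : hom X Y) (f : hom W X) :
  invertible2 (assoc_inv h g f).
Proof. exists (assoc h g f). split; [apply (assoc_inv_r HD) | apply (assoc_inv_l HD)]. Qed.

Lemma lunit_invertible {X Y : ob D} (f : hom X Y) : invertible2 (lunit f).
Proof. exists (lunit_inv f). split; [apply (lunit_inv_l HD) | apply (lunit_inv_r HD)]. Qed.

Lemma lunit_inv_invertible {X Y : ob D} (f : hom X Y) : invertible2 (lunit_inv f).
Proof. exists (lunit f). split; [apply (lunit_inv_r HD) | apply (lunit_inv_l HD)]. Qed.

Lemma runit_invertible {X Y : ob D} (f : hom X Y) : invertible2 (runit f).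
Proof. exists (runit_inv f). split; [apply (runit_inv_l HD) | apply (runit_inv_r HD)]. Qed.

Lemma runit_inv_invertible {X Y : ob D} (f : hom X Y) : invertible2 (runit_inv f).
Proof. exists (runit f). split; [apply (runit_inv_r HD) | apply (runit_inv_l HD)]. Qed.

Lemma vcomp_cancel_r {X Y : ob D} {f g h : hom X Y} (a : cell f g) (b c : cell g h) :
  invertible2 a -> b • a = c • a -> b = c.
Proof.
  intros [a' [_ Ha]] E.
  rewrite <- (vcomp_id2 b), <- (vcomp_id2 c), <- Ha, !vcompA, E. reflexivity.
Qed.

Lemma vcomp_cancel_l {X Y : ob D} {f g h : hom X Y} (a : cell g h) (b c : cell f g) :
  invertible2 a -> a • b = a • c -> b = c.
Proof.
  intros [a' [Ha _]] E.
  rewrite <- (id2_vcomp b), <- (id2_vcomp c), <- Ha, <- !vcompA, E. reflexivity.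
Qed.

(* A left inverse [l • t] and a right inverse [t • r] of [a] must coincide. *)
Lemma invertible_of_sides {X Y : ob D} {f g : hom X Y} (a : cell f g) (t : cell g f) :
  invertible2 (t • a) -> invertible2 (a • t) -> invertible2 a.
Proof.
  intros [l [Hl _]] [r [_ Hr]].
  assert (Hleft : l • t • a = id2 f) by (rewrite <- vcompA; exact Hl).
  assert (Hright : a • (t • r) = id2 g) by (rewrite vcompA; exact Hr).
  assert (E : l • t = t • r).
  { rewrite <- (vcomp_id2 (l • t)), <- Hright, vcompA, Hleft, id2_vcomp. reflexivity. }
  exists (t • r). split; [rewrite <- E; exact Hleft | exact Hright].
Qed.

Lemma runit_inv_nat {X Y : ob D} {f f' : hom X Y} (a : cell f f') :
  runit_inv f' • a = (a ⋆ id2 (id1 X)) • runit_inv f.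
Proof.
  apply (vcomp_cancel_r (runit f)); [apply runit_invertible |].
  rewrite <- (vcompA _ (runit_inv f)), (runit_inv_l HD), vcomp_id2.
  apply (vcomp_cancel_l (runit f')); [apply runit_invertible |].
  rewrite !vcompA, (runit_inv_r HD), id2_vcomp, (runit_nat HD). reflexivity.
Qed.

Lemma rwhisker_id1_inj {X Y : ob D} {f f' : hom X Y} (a b : cell f f') :
  a ⋆ id2 (id1 X) = b ⋆ id2 (id1 X) -> a = b.
Proof.
  intros E. apply (vcomp_cancel_r (runit f)); [apply runit_invertible |].
  rewrite <- !(runit_nat HD), E. reflexivity.
Qed.

End TwoCellCalculus.

(* [vrewrite HD E] rewrites with [E] also when its left side, a left-nested composite
   [c • b • a], only occurs as the innermost factors of a longer one [x • c • b • a]. *)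
Tactic Notation "vrewrite" constr(HD) open_constr(E) :=
  first [ rewrite E | rewrite (vcomp_lcongr2 HD E) | rewrite (vcomp_lcongr3 HD E) ];
  rewrite ?(vcompA HD).

Lemma runit_comp1 {D : bicat_data} (HD : is_bicat D) {X Y Z : ob D} (g : hom Y Z) (f : hom X Y) :
  runit (g ∘ f) = (id2 g ⋆ runit f) • assoc g f (id1 X).
Proof.
  symmetry. apply (rwhisker_id1_inj HD).
  apply (vcomp_cancel_l HD (assoc g f (id1 X))); [apply (assoc_invertible HD) |].
  rewrite (rwhisker_vcomp HD), (vcompA HD), (assoc_nat HD), <- (triangle HD f (id1 X)),
    (lwhisker_vcomp HD).
  vrewrite HD (pentagon HD _ _ _ _).
  rewrite <- (assoc_nat HD (id2 g) (id2 f) (lunit (id1 X))), (hcomp_id2 HD), <- (vcompA HD),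
    (triangle HD).
  reflexivity.
Qed.

Section LeftWhiskering.
Context {D : bicat_data} (HD : is_bicat D).

Definition lwhisker_injective {Y Z : ob D} (x : hom Y Z) : Prop :=
  forall (W : ob D) (h h' : hom W Y) (c c' : cell h h'), id2 x ⋆ c = id2 x ⋆ c' -> c = c'.

Definition lwhisker_surjective {Y Z : ob D} (x : hom Y Z) : Prop :=
  forall (W : ob D) (h h' : hom W Y) (d : cell (x ∘ h) (x ∘ h')), exists c, id2 x ⋆ c = d.

Lemma lwhisker_id1 {W Y : ob D} {h h' : hom W Y} (c : cell h h') :
  id2 (id1 Y) ⋆ c = lunit_inv h' • c • lunit h.
Proof.
  rewrite <- (vcompA HD), <- (lunit_nat HD), (vcompA HD), (lunit_inv_l HD), (id2_vcomp HD).
  reflexivity.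
Qed.

Lemma lwhisker_comp1 {W X Y Z : ob D} (x : hom Y Z) (y : hom X Y) {h h' : hom W X}
    (c : cell h h') :
  id2 (x ∘ y) ⋆ c = assoc_inv x y h' • (id2 x ⋆ (id2 y ⋆ c)) • assoc x y h.
Proof.
  rewrite <- (vcompA HD), <- (assoc_nat HD), (vcompA HD), (assoc_inv_l HD), (id2_vcomp HD),
    (hcomp_id2 HD).
  reflexivity.
Qed.

Lemma lwhisker_iso {W Y Z : ob D} {x x' : hom Y Z} (r : cell x x') (r' : cell x' x)
    (Hr : r' • r = id2 x) (Hr' : r • r' = id2 x') {h h' : hom W Y} (c : cell h h') :
  id2 x' ⋆ c = (r ⋆ id2 h') • (id2 x ⋆ c) • (r' ⋆ id2 h).
Proof. rewrite <- !(hcomp_vcomp HD), !(id2_vcomp HD), !(vcomp_id2 HD), Hr'. reflexivity. Qed.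

Lemma id1_lwhisker_injective (Y : ob D) : lwhisker_injective (id1 Y).
Proof.
  intros W h h' c c' E. rewrite !lwhisker_id1 in E.
  apply (vcomp_cancel_r HD _ _ _ (lunit_invertible HD h)) in E.
  exact (vcomp_cancel_l HD _ _ _ (lunit_inv_invertible HD h') E).
Qed.

Lemma id1_lwhisker_surjective (Y : ob D) : lwhisker_surjective (id1 Y).
Proof.
  intros W h h' d. exists (lunit h' • d • lunit_inv h).
  rewrite lwhisker_id1, !(vcompA HD), (lunit_inv_l HD), (id2_vcomp HD), <- (vcompA HD),
    (lunit_inv_l HD), (vcomp_id2 HD).
  reflexivity.
Qed.

Lemma lwhisker_injective_iso {Y Z : ob D} {x x' : hom Y Z} (r : cell x x') :
  invertible2 r -> lwhisker_injective x -> lwhisker_injective x'.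
Proof.
  intros [r' [H1 H2]] Hx W h h' c c' E.
  apply Hx. rewrite !(lwhisker_iso r r' H1 H2) in E.
  apply (vcomp_cancel_r HD) in E;
    [| apply (hcomp_invertible HD); [exists r; split; assumption | apply (id2_invertible HD)]].
  apply (vcomp_cancel_l HD) in E;
    [exact E |
     apply (hcomp_invertible HD); [exists r'; split; assumption | apply (id2_invertible HD)]].
Qed.

Lemma lwhisker_surjective_iso {Y Z : ob D} {x x' : hom Y Z} (r : cell x x') :
  invertible2 r -> lwhisker_surjective x -> lwhisker_surjective x'.
Proof.
  intros [r' [H1 H2]] Hx W h h' d.
  destruct (Hx W h h' ((r' ⋆ id2 h') • d • (r ⋆ id2 h))) as [c Hc].
  exists c. rewrite (lwhisker_iso r r' H1 H2), Hc, !(vcompA HD), <- (rwhisker_vcomp HD), H2,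
    (hcomp_id2 HD), (id2_vcomp HD), <- (vcompA HD), <- (rwhisker_vcomp HD), H2, (hcomp_id2 HD),
    (vcomp_id2 HD).
  reflexivity.
Qed.

Lemma lwhisker_injective_comp1 {X Y Z : ob D} (x : hom Y Z) (y : hom X Y) :
  lwhisker_injective (x ∘ y) -> lwhisker_injective y.
Proof. intros Hxy W h h' c c' E. apply Hxy. rewrite !lwhisker_comp1, E. reflexivity. Qed.

Lemma lwhisker_surjective_comp1 {X Y Z : ob D} (x : hom Y Z) (y : hom X Y) :
  lwhisker_surjective (x ∘ y) -> lwhisker_injective x -> lwhisker_surjective y.
Proof.
  intros Hxy Hx W h h' d.
  destruct (Hxy W h h' (assoc_inv x y h' • (id2 x ⋆ d) • assoc x y h)) as [c Hc].
  exists c. apply Hx. rewrite lwhisker_comp1 in Hc.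
  apply (vcomp_cancel_r HD _ _ _ (assoc_invertible HD _ _ _)) in Hc.
  exact (vcomp_cancel_l HD _ _ _ (assoc_inv_invertible HD _ _ _) Hc).
Qed.

Lemma equivalence_lwhisker_bijective {X Y : ob D} (e : hom X Y) (g : hom Y X)
    (eta : cell (id1 X) (g ∘ e)) (eps : cell (e ∘ g) (id1 Y)) :
  invertible2 eta -> invertible2 eps -> lwhisker_injective e /\ lwhisker_surjective e.
Proof.
  intros Heta [eps' [Heps1 Heps2]].
  assert (Hge_inj : lwhisker_injective (g ∘ e))
    by exact (lwhisker_injective_iso eta Heta (id1_lwhisker_injective X)).
  assert (Hge_surj : lwhisker_surjective (g ∘ e))
    by exact (lwhisker_surjective_iso eta Heta (id1_lwhisker_surjective X)).
  assert (Heg_inj : lwhisker_injective (e ∘ g)).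
  { apply (lwhisker_injective_iso eps'); [exists eps; split; assumption |].
    apply id1_lwhisker_injective. }
  split.
  - exact (lwhisker_injective_comp1 g e Hge_inj).
  - exact (lwhisker_surjective_comp1 g e Hge_surj (lwhisker_injective_comp1 e g Heg_inj)).
Qed.

End LeftWhiskering.

Section LaxFunctor.
Context {B C : bicat_data} (HB : is_bicat B) (HC : is_bicat C)
  (F : lax_functor_data B C) (HF : is_lax_functor F).

Lemma fcell_invertible {A A' : ob B} {f g : hom A A'} (a : cell f g) :
  invertible2 a -> invertible2 (fcell F a).
Proof.
  intros [b [H1 H2]]. exists (fcell F b).
  rewrite <- !(fcell_vcomp HF), H1, H2, !(fcell_id HF). split; reflexivity.
Qed.

(* Pick [i : F p ≅ 1]; then [t] below is inverse to [F^0] up to unitors on both sides,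
   the right-hand side because [F^0 • i] lifts to a 2-cell [p ⇒ 1_A]. *)
Lemma funit_invertible :
  essentially_full F -> fully_faithful F -> forall A : ob B, invertible2 (funit F A).
Proof.
  intros Hfull Hff A.
  destruct (Hfull A A (id1 (fob F A))) as [p [i [i' [Hi1 Hi2]]]].
  set (t := i • fcell F (lunit p) • fcomp F (id1 A) p • (id2 (fhom F (id1 A)) ⋆ i')
            • runit_inv (fhom F (id1 A))).
  apply (invertible_of_sides HC _ t).
  - assert (E : lunit (id1 (fob F A)) • runit_inv (id1 (fob F A)) = t • funit F A).
    { unfold t.
      vrewrite HC (runit_inv_nat HC _).
      vrewrite HC (eq_sym (hcomp_vcomp HC _ _ _ _)).
      rewrite (id2_vcomp HC), (vcomp_id2 HC), (hcomp_whisker_l HC), !(vcompA HC).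
      vrewrite HC (eq_sym (lax_lunit HF _)).
      vrewrite HC (lunit_nat HC _).
      vrewrite HC Hi2. rewrite (id2_vcomp HC). reflexivity. }
    rewrite <- E.
    apply (vcomp_invertible HC); [apply (lunit_invertible HC) | apply (runit_inv_invertible HC)].
  - destruct (proj2 (Hff A A p (id1 A)) (funit F A • i)) as [gm Hgm].
    assert (E : funit F A • t = fcell F (lunit (id1 A)) • fcell F (runit_inv (id1 A))).
    { unfold t. rewrite !(vcompA HC), <- Hgm, <- (fcell_vcomp HF), <- (lunit_nat HB),
        (fcell_vcomp HF).
      vrewrite HC (eq_sym (fcomp_nat HF _ _)).
      rewrite (fcell_id HF).
      vrewrite HC (eq_sym (lwhisker_vcomp HC _ _ _)).
      rewrite Hgm, <- (vcompA HC (funit F A) i i'), Hi2, (vcomp_id2 HC).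
      transitivity (fcell F (lunit (id1 A)) • fcell F (runit_inv (id1 A))
                    • (runit (fhom F (id1 A)) • runit_inv (fhom F (id1 A)))).
      2:{ rewrite (runit_inv_r HC), (vcomp_id2 HC). reflexivity. }
      rewrite (lax_runit HF (id1 A)), !(vcompA HC).
      vrewrite HC (eq_sym (fcell_vcomp HF (runit_inv (id1 A)) (runit (id1 A)))).
      rewrite (runit_inv_l HB), (fcell_id HF), (vcomp_id2 HC). reflexivity. }
    rewrite E. apply (vcomp_invertible HC); apply fcell_invertible;
      [apply (lunit_invertible HB) | apply (runit_inv_invertible HB)].
Qed.

End LaxFunctor.

Record cellpred_closed {D : bicat_data} (P : cellpred D) : Prop := {
  cellpred_id2 : forall (X Y : ob D) (f : hom X Y), P _ _ _ _ (id2 f);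
  cellpred_vcomp : forall (X Y : ob D) (f g h : hom X Y) (a : cell f g) (b : cell g h),
      P _ _ _ _ a -> P _ _ _ _ b -> P _ _ _ _ (b • a);
  cellpred_hcomp : forall (X Y Z : ob D) (g g' : hom Y Z) (f f' : hom X Y)
      (b : cell g g') (a : cell f f'), P _ _ _ _ b -> P _ _ _ _ a -> P _ _ _ _ (b ⋆ a);
  cellpred_assoc : forall (W X Y Z : ob D) (h : hom Y Z) (g : hom X Y) (f : hom W X),
      P _ _ _ _ (assoc h g f);
  cellpred_assoc_inv : forall (W X Y Z : ob D) (h : hom Y Z) (g : hom X Y) (f : hom W X),
      P _ _ _ _ (assoc_inv h g f);
  cellpred_lunit : forall (X Y : ob D) (f : hom X Y), P _ _ _ _ (lunit f);
  cellpred_lunit_inv : forall (X Y : ob D) (f : hom X Y), P _ _ _ _ (lunit_inv f);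
  cellpred_runit : forall (X Y : ob D) (f : hom X Y), P _ _ _ _ (runit f);
  cellpred_runit_inv : forall (X Y : ob D) (f : hom X Y), P _ _ _ _ (runit_inv f)
}.

Section IncLaxTerminal.
Context {D : bicat_data} (HD : is_bicat D) (P : cellpred D) (HP : cellpred_closed P).

Ltac cellpred_closure :=
  repeat first [ assumption | apply (cellpred_id2 _ HP) | apply (cellpred_vcomp _ HP)
               | apply (cellpred_hcomp _ HP) | apply (cellpred_assoc _ HP)
               | apply (cellpred_assoc_inv _ HP) | apply (cellpred_lunit _ HP)
               | apply (cellpred_lunit_inv _ HP) | apply (cellpred_runit _ HP)
               | apply (cellpred_runit_inv _ HP) ].

Lemma initial_1cell_cells_eq {Z T : ob D} {f g : hom Z T} (a b : cell f g) :
  initial_1cell P f -> P _ _ _ _ a -> P _ _ _ _ b -> a = b.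
Proof.
  intros Hf Ha Hb. destruct (Hf g) as [c [_ Hc]]. rewrite (Hc a Ha), (Hc b Hb). reflexivity.
Qed.

Lemma initial_1cell_transport {Z T : ob D} {f f' : hom Z T} (a : cell f f') (a' : cell f' f) :
  P _ _ _ _ a -> P _ _ _ _ a' -> a • a' = id2 f' ->
  initial_1cell P f -> initial_1cell P f'.
Proof.
  intros Ha Ha' Hinv Hf g. destruct (Hf g) as [c [Hc Hc_unique]].
  exists (c • a'). split; [cellpred_closure |].
  intros b Hb.
  rewrite <- (Hc_unique (b • a)) by cellpred_closure.
  rewrite <- (vcompA HD), Hinv, (vcomp_id2 HD). reflexivity.
Qed.

Definition initial_cell {Z T : ob D} {f : hom Z T} (Hf : initial_1cell P f) (g : hom Z T)
  : cell f g := proj1_sig (constructive_indefinite_description _ (Hf g)).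

Lemma initial_cell_spec {Z T : ob D} {f : hom Z T} (Hf : initial_1cell P f) (g : hom Z T) :
  P _ _ _ _ (initial_cell Hf g).
Proof. exact (proj1 (proj2_sig (constructive_indefinite_description _ (Hf g)))). Qed.

Variable T : ob D.
Hypothesis id1_initial : initial_1cell P (id1 T).
Hypothesis initial_exists : forall Z : ob D, exists k : hom Z T, initial_1cell P k.

Definition terminal_leg (Z : ob D) : hom Z T :=
  match excluded_middle_informative (Z = T) with
  | left e => eq_rect_r (fun Z => hom Z T) (id1 T) e
  | right _ => proj1_sig (constructive_indefinite_description _ (initial_exists Z))
  end.

Lemma terminal_leg_initial (Z : ob D) : initial_1cell P (terminal_leg Z).
Proof.
  unfold terminal_leg. destruct (excluded_middle_informative (Z = T)) as [e | _].
  - subst Z. exact id1_initial.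
  - exact (proj2_sig (constructive_indefinite_description _ (initial_exists Z))).
Qed.

Lemma terminal_leg_id : terminal_leg T = id1 T.
Proof.
  unfold terminal_leg. destruct (excluded_middle_informative (T = T)) as [e | ne].
  - rewrite (proof_irrelevance _ e eq_refl). reflexivity.
  - contradiction (ne eq_refl).
Qed.

Lemma id1_terminal_leg_initial (Z : ob D) : initial_1cell P (id1 T ∘ terminal_leg Z).
Proof.
  apply (initial_1cell_transport (lunit_inv _) (lunit _)); try cellpred_closure.
  - apply (lunit_inv_l HD).
  - apply terminal_leg_initial.
Qed.

Lemma id1_id1_terminal_leg_initial (Z : ob D) :
  initial_1cell P ((id1 T ∘ id1 T) ∘ terminal_leg Z).
Proof.
  apply (initial_1cell_transport (lunit_inv _ ⋆ id2 _) (lunit _ ⋆ id2 _)); try cellpred_closure.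
  - rewrite <- (hcomp_vcomp HD), (lunit_inv_l HD), (id2_vcomp HD), (hcomp_id2 HD). reflexivity.
  - apply id1_terminal_leg_initial.
Qed.

Definition terminal_naturator {Z Z' : ob D} (u : hom Z Z')
  : cell (id1 T ∘ terminal_leg Z) (terminal_leg Z' ∘ u) :=
  initial_cell (id1_terminal_leg_initial Z) (terminal_leg Z' ∘ u).

Lemma terminal_naturator_cellpred {Z Z' : ob D} (u : hom Z Z') :
  P _ _ _ _ (terminal_naturator u).
Proof. apply initial_cell_spec. Qed.

(* Each axiom of a lax transformation equates two cells out of an initial 1-cell. *)
Lemma inc_lax_terminal_of_initial : inc_lax_terminal P T.
Proof.
  exists terminal_leg, (@terminal_naturator). split; [| split].
  - split; [intros; apply terminal_naturator_cellpred |].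
    repeat split; cbn; intros;
      (apply initial_1cell_cells_eq;
       [apply id1_terminal_leg_initial || apply id1_id1_terminal_leg_initial | |]);
      cellpred_closure; apply terminal_naturator_cellpred.
  - apply terminal_leg_initial.
  - apply terminal_leg_id.
Qed.

End IncLaxTerminal.

Section LaxSlice.
Context {B C : bicat_data} (HB : is_bicat B) (HC : is_bicat C)
  (F : lax_functor_data B C) (HF : is_lax_functor F) (X : ob C).

Notation P := (lax_slice_cells F X).

Lemma lax_slice_is_bicat : is_bicat (lax_slice F X).
Proof.
  destruct HB; constructor; intros; cbn;
    first [ apply vcomp_assoc | apply vcomp_id_l | apply vcomp_id_r | apply hcomp_id
          | apply interchange | apply assoc_nat | apply lunit_nat | apply runit_nat
          | apply assoc_inv_l | apply assoc_inv_r | apply lunit_inv_l | apply lunit_inv_r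
          | apply runit_inv_l | apply runit_inv_r | apply pentagon | apply triangle ].
Qed.

Lemma lax_slice_cells_id2 (Z0 Z1 : slice_ob F X) (u : slice_hom Z0 Z1) :
  P Z0 Z1 u u (id2 (projT1 u)).
Proof.
  destruct u as [p th]. unfold lax_slice_cells; cbn.
  rewrite (fcell_id HF), (hcomp_id2 HC), (id2_vcomp HC). reflexivity.
Qed.

Lemma lax_slice_cells_vcomp (Z0 Z1 : slice_ob F X) (u v w : slice_hom Z0 Z1)
    (a : cell (projT1 u) (projT1 v)) (b : cell (projT1 v) (projT1 w)) :
  P Z0 Z1 u v a -> P Z0 Z1 v w b -> P Z0 Z1 u w (b • a).
Proof.
  unfold lax_slice_cells. intros Ha Hb.
  rewrite (fcell_vcomp HF), (lwhisker_vcomp HC), <- (vcompA HC), Ha, Hb. reflexivity.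
Qed.

Lemma lax_slice_cells_inverse (Z0 Z1 : slice_ob F X) (u v : slice_hom Z0 Z1)
    (a : cell (projT1 u) (projT1 v)) (a' : cell (projT1 v) (projT1 u)) :
  a' • a = id2 _ -> P Z0 Z1 u v a -> P Z0 Z1 v u a'.
Proof.
  unfold lax_slice_cells. intros Hinv Ha.
  rewrite <- Ha, (vcompA HC), <- (lwhisker_vcomp HC), <- (fcell_vcomp HF), Hinv, (fcell_id HF),
    (hcomp_id2 HC), (id2_vcomp HC).
  reflexivity.
Qed.

Lemma lax_slice_cells_hcomp (Z0 Z1 Z2 : slice_ob F X) (u u' : slice_hom Z0 Z1)
    (v v' : slice_hom Z1 Z2) (a : cell (projT1 u) (projT1 u'))
    (b : cell (projT1 v) (projT1 v')) :
  P Z0 Z1 u u' a -> P Z1 Z2 v v' b ->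
  P Z0 Z2 (slice_comp1 v u) (slice_comp1 v' u') (b ⋆ a).
Proof.
  destruct Z0 as [A0 f0], Z1 as [A1 f1], Z2 as [A2 f2],
    u as [p th], u' as [p' th'], v as [q si], v' as [q' si'].
  unfold lax_slice_cells, slice_comp1; cbn. intros Ha Hb. rewrite <- Ha, <- Hb.
  rewrite !(vcompA HC), <- (lwhisker_vcomp HC), <- (fcomp_nat HF), (lwhisker_vcomp HC).
  vrewrite HC (eq_sym (assoc_nat HC _ _ _)).
  vrewrite HC (eq_sym (hcomp_vcomp HC _ _ _ _)).
  rewrite (vcomp_id2 HC), (hcomp_whisker_l HC (_ • si)), !(vcompA HC).
  reflexivity.
Qed.

Lemma lax_slice_cells_lunit (Z0 Z1 : slice_ob F X) (u : slice_hom Z0 Z1) :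
  P Z0 Z1 (slice_comp1 (slice_id1 Z1) u) u (lunit (projT1 u)).
Proof.
  destruct Z0 as [A0 f0], Z1 as [A1 f1], u as [p th].
  unfold lax_slice_cells, slice_comp1, slice_id1; cbn.
  rewrite !(vcompA HC), <- (lwhisker_vcomp HC), (rwhisker_vcomp HC), !(vcompA HC).
  vrewrite HC (assoc_nat HC _ _ _).
  vrewrite HC (eq_sym (lwhisker_vcomp HC _ _ _)).
  rewrite <- (lax_lunit HF).
  vrewrite HC (triangle HC _ _).
  vrewrite HC (eq_sym (rwhisker_vcomp HC _ _ _)).
  rewrite (runit_inv_r HC), (hcomp_id2 HC), (id2_vcomp HC). reflexivity.
Qed.

Lemma lax_slice_cells_runit (Z0 Z1 : slice_ob F X) (u : slice_hom Z0 Z1) :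
  P Z0 Z1 (slice_comp1 u (slice_id1 Z0)) u (runit (projT1 u)).
Proof.
  destruct Z0 as [A0 f0], Z1 as [A1 f1], u as [p th].
  unfold lax_slice_cells, slice_comp1, slice_id1; cbn.
  rewrite !(vcompA HC), <- (lwhisker_vcomp HC).
  vrewrite HC (eq_sym (hcomp_vcomp HC _ _ _ _)).
  rewrite (vcomp_id2 HC), (id2_vcomp HC), (hcomp_whisker_r HC th), !(vcompA HC).
  cbn. rewrite <- (hcomp_id2 HC f1 (@fhom B C F A0 A1 p)).
  vrewrite HC (assoc_nat HC _ _ _).
  vrewrite HC (eq_sym (lwhisker_vcomp HC _ _ _)).
  rewrite <- (lax_runit HF).
  vrewrite HC (eq_sym (runit_comp1 HC _ _)).
  vrewrite HC (runit_nat HC _).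
  rewrite <- (vcompA HC), (runit_inv_r HC), (vcomp_id2 HC). reflexivity.
Qed.

Lemma lax_slice_cells_assoc (Z0 Z1 Z2 Z3 : slice_ob F X) (u : slice_hom Z0 Z1)
    (v : slice_hom Z1 Z2) (w : slice_hom Z2 Z3) :
  P Z0 Z3 (slice_comp1 (slice_comp1 w v) u) (slice_comp1 w (slice_comp1 v u))
    (assoc (projT1 w) (projT1 v) (projT1 u)).
Proof.
  destruct Z0 as [A0 f0], Z1 as [A1 f1], Z2 as [A2 f2], Z3 as [A3 f3],
    u as [p th], v as [q si], w as [r ta].
  unfold lax_slice_cells, slice_comp1; cbn.
  rewrite !(vcompA HC), <- (lwhisker_vcomp HC), !(rwhisker_vcomp HC), !(vcompA HC).
  vrewrite HC (assoc_nat HC _ _ _).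
  vrewrite HC (eq_sym (lwhisker_vcomp HC _ _ _)).
  rewrite (lax_assoc HF), !(lwhisker_vcomp HC), ?(vcompA HC).
  vrewrite HC (pentagon HC _ _ _ _).
  vrewrite HC (assoc_nat HC _ _ _).
  rewrite (hcomp_id2 HC).
  vrewrite HC (eq_sym (assoc_nat HC _ _ _)).
  rewrite (hcomp_id2 HC).
  vrewrite HC (eq_sym (hcomp_vcomp HC _ _ _ _)).
  rewrite (id2_vcomp HC), (vcomp_id2 HC), (hcomp_whisker_l HC ta), !(vcompA HC).
  reflexivity.
Qed.

Lemma lax_slice_cells_closed : cellpred_closed P.
Proof.
  constructor; intros.
  - apply lax_slice_cells_id2.
  - eapply lax_slice_cells_vcomp; eassumption.
  - apply lax_slice_cells_hcomp; assumption.
  - apply lax_slice_cells_assoc.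
  - eapply lax_slice_cells_inverse; [apply (assoc_inv_l HB) | apply lax_slice_cells_assoc].
  - apply lax_slice_cells_lunit.
  - eapply lax_slice_cells_inverse; [apply (lunit_inv_l HB) | apply lax_slice_cells_lunit].
  - apply lax_slice_cells_runit.
  - eapply lax_slice_cells_inverse; [apply (runit_inv_l HB) | apply lax_slice_cells_runit].
Qed.

End LaxSlice.

Section StrongSliceHoms.
Context {B C : bicat_data} (HC : is_bicat C) (F : lax_functor_data B C) (X : ob C).

Notation P := (lax_slice_cells F X).

Definition strong_slice_hom {Z0 Z1 : slice_ob F X} (u : slice_hom Z0 Z1) : Prop :=
  invertible2 (projT2 u).

(* For strong [u], a slice cell [a : u ⇒ w] is a solution of [e ⋆ F a = θ_w • θ_u^-1]. *)
Lemma strong_slice_hom_initial (Hff : fully_faithful F) (T : slice_ob F X) :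
  lwhisker_injective (projT2 T) -> lwhisker_surjective (projT2 T) ->
  forall (Z : slice_ob F X) (u : slice_hom Z T), strong_slice_hom u -> initial_1cell P u.
Proof.
  destruct T as [A e]. intros Hinj Hsurj Z [p th] [th' [Hth1 Hth2]] [q si].
  unfold lax_slice_cells; cbn in *.
  destruct (Hsurj _ _ _ (si • th')) as [c Hc].
  destruct (proj2 (Hff _ _ p q) c) as [a Ha].
  exists a. split.
  - rewrite Ha, Hc, <- (vcompA HC), Hth1, (vcomp_id2 HC). reflexivity.
  - intros b Hb. apply (proj1 (Hff _ _ p q)), Hinj.
    rewrite Ha, Hc, <- Hb, <- (vcompA HC), Hth2, (vcomp_id2 HC). reflexivity.
Qed.

Lemma slice_id1_strong (Z : slice_ob F X) :
  invertible2 (funit F (projT1 Z)) -> strong_slice_hom (slice_id1 Z).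
Proof.
  intros Hunit. apply (vcomp_invertible HC); [| apply (runit_inv_invertible HC)].
  apply (hcomp_invertible HC); [apply (id2_invertible HC) | exact Hunit].
Qed.

(* With [ε : e ∘ g ≅ 1] and [i : F p ≅ g ∘ f], take [f ≅ e ∘ g ∘ f ≅ e ∘ F p]. *)
Lemma strong_slice_hom_exists (Hfull : essentially_full F) (A : ob B) (e : hom (fob F A) X)
    (g : hom X (fob F A)) (eps : cell (e ∘ g) (id1 X)) :
  invertible2 eps -> forall Z : slice_ob F X, exists u : slice_hom Z (existT _ A e),
    strong_slice_hom u.
Proof.
  intros [eps' [Heps1 Heps2]] [A0 f0].
  destruct (Hfull A0 A (g ∘ f0)) as [p [i [i' [Hi1 Hi2]]]].
  exists (existT (fun p => cell f0 (e ∘ fhom F p)) p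
            ((id2 e ⋆ i') • assoc e g f0 • (eps' ⋆ id2 f0) • lunit_inv f0)).
  repeat apply (vcomp_invertible HC).
  - apply (hcomp_invertible HC); [apply (id2_invertible HC) | exists i; split; assumption].
  - apply (assoc_invertible HC).
  - apply (hcomp_invertible HC); [exists eps; split; assumption | apply (id2_invertible HC)].
  - apply (lunit_inv_invertible HC).
Qed.

End StrongSliceHoms.

Theorem proposition4p7 (B C : bicat_data) (HB : is_bicat B) (HC : is_bicat C)
    (F : lax_functor_data B C) (HF : is_lax_functor F) :
  essentially_surjective F -> essentially_full F -> fully_faithful F ->
  forall X : ob C, has_inc_lax_terminal (lax_slice_cells F X).
Proof.
  intros Hess Hfull Hff X.
  destruct (Hess X) as [A [e [g [eta [eps [Heta [Heps _]]]]]]].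
  destruct (equivalence_lwhisker_bijective HC e g eta eps Heta Heps) as [Hinj Hsurj].
  set (T := existT (fun A => hom (fob F A) X) A e).
  exists T.
  apply (inc_lax_terminal_of_initial (lax_slice_is_bicat HB F X) _
           (lax_slice_cells_closed HB HC F HF X)).
  - apply (strong_slice_hom_initial HC F X Hff T Hinj Hsurj), slice_id1_strong, funit_invertible;
      assumption.
  - intros Z. destruct (strong_slice_hom_exists HC F X Hfull A e g eps Heps Z) as [u Hu].
    exists u. exact (strong_slice_hom_initial HC F X Hff T Hinj Hsurj Z u Hu).
Qed.
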